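(* None of the 20 rules of BOOL can be omitted in the Characterization Theorem: for each rule $r$ of BOOL there is a non-failed Boolean CSP that is closed under the applications of all rules of BOOL other than $r$ but is not hyper-arc consistent. For instance, for $r=$ AND4, the CSP $\langle x\wedge y=z;\ x=0,\ y\in\{0,1\},\ z\in\{0,1\}\rangle$ is such a CSP.
   Context: A Boolean CSP is $\langle \mathcal C; x_1\in D_1,\dots,x_n\in D_n\rangle$ with $D_i\subseteq\{0,1\}$ and $\mathcal C$ a finite set of Boolean constraints, each of one of the forms $u=v$ (relation $\{(0,0),(1,1)\}$), $\neg u=v$ ($\{(0,1),(1,0)\}$), $u\wedge v=w$ ($\{(0,0,0),(0,1,0),(1,0,0),(1,1,1)\}$), $u\vee v=w$ ($\{(0,0,0),(0,1,1),(1,0,1),(1,1,1)\}$) on distinct variables; each constraint is understood as restricted to the current domains. We write $x=d$ for $x\in\{d\}$. A CSP is failed if some domain is empty. A constraint is solved if it equals the product of the domains of its variables. $\phi$ is a reformulation of $\psi$ if removing solved constraints from both yields the same CSP. The proof system BOOL consists of the rules (constraint, premise $\rightarrow$ conclusion; $x,y,z$ schematic): EQU1: $x=y$, $x=1\rightarrow y=1$; EQU2: $x=y$, $y=1\rightarrow x=1$; EQU3: $x=y$, $x=0\rightarrow y=0$; EQU4: $x=y$, $y=0\rightarrow x=0$; NOT1: $\neg x=y$, $x=1\rightarrow y=0$; NOT2: $\neg x=y$, $x=0\rightarrow y=1$; NOT3: $\neg x=y$, $y=1\rightarrow x=0$; NOT4: $\neg x=y$, $y=0\rightarrow x=1$;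 AND1: $x\wedge y=z$, $x=1,y=1\rightarrow z=1$; AND2: $x\wedge y=z$, $x=1,z=0\rightarrow y=0$; AND3: $x\wedge y=z$, $y=1,z=0\rightarrow x=0$; AND4: $x\wedge y=z$, $x=0\rightarrow z=0$; AND5: $x\wedge y=z$, $y=0\rightarrow z=0$; AND6: $x\wedge y=z$, $z=1\rightarrow x=1,y=1$; OR1: $x\vee y=z$, $x=1\rightarrow z=1$; OR2: $x\vee y=z$, $x=0,y=0\rightarrow z=0$; OR3: $x\vee y=z$, $x=0,z=1\rightarrow y=1$; OR4: $x\vee y=z$, $y=0,z=1\rightarrow x=1$; OR5: $x\vee y=z$, $y=1\rightarrow z=1$; OR6: $x\vee y=z$, $z=0\rightarrow x=0,y=0$. On CSPs, such a rule with constraint $c$, premise $X=s$, conclusion $Y=t$ acts as: applicable to a CSP containing (an instance of) $c$ in which each variable of $X$ has domain exactly $\{s_i\}$; the result removes $c$ and replaces the domain $D$ of each variable $y_j$ of $Y$ by $D\cap\{t_j\}$. An application is relevant if its result is not a reformulation of the original CSP. A CSP is closed under the applications of a rule $R$ if $R$ cannot be applied to it or no application of it is relevant. A constraint is hyper-arc consistent if for every variable of it each value in its domain participates in a solution to the constraint; a CSP is hyper-arc consistent if every constraint of it is. *)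

From HB Require Import structures.
From mathcomp Require Import all_boot.
Set Implicit Arguments. Unset Strict Implicit. Unset Printing Implicit Defensive.

Inductive kind := KEq | KNot | KAnd | KOr.

Definition kind_eqb (a b : kind) : bool :=
  match a, b with
  | KEq, KEq | KNot, KNot | KAnd, KAnd | KOr, KOr => true
  | _, _ => false end.
Lemma kind_eqP : Equality.axiom kind_eqb.
Proof. by case; case; constructor. Qed.
HB.instance Definition _ := hasDecEq.Build kind kind_eqP.

Definition arity (k : kind) : nat :=
  match k with KEq | KNot => 2 | KAnd | KOr => 3 end.

(* The relation of a constraint kind, on the tuple of values of its variables
   (ordered as x,y for x=y and ~x=y, and x,y,z for x/\y=z, x\/y=z). *)
Definition krel (k : kind) (s : seq bool) : bool :=
  match k, s with
  | KEq, [:: a; b] => a == b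
  | KNot, [:: a; b] => b == ~~ a
  | KAnd, [:: a; b; c] => c == a && b
  | KOr, [:: a; b; c] => c == a || b
  | _, _ => false
  end.

Definition constr (n : nat) := (kind * seq 'I_n)%type.

Definition wf_constr n (c : constr n) : bool := (size c.2 == arity c.1) && uniq c.2.

(* A Boolean CSP on variables x_0..x_(n-1): a finite set of constraints
   (given as a list, read as a set) and domains D_i ⊆ {0,1}. *)
Record csp (n : nat) := CSP { cons : seq (constr n); dom : 'I_n -> {set bool} }.

Definition wf_csp n (P : csp n) : Prop := forall c, c \in cons P -> wf_constr c.

Definition failed n (P : csp n) : Prop := exists x, dom P x = set0.

Definition in_dom n (D : 'I_n -> {set bool}) (c : constr n) (s : seq bool) : bool :=
  all2 (fun x a => a \in D x) c.2 s.

(* Solved: the constraint restricted to the domains equals the product of the domains. *)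
Definition solved n (D : 'I_n -> {set bool}) (c : constr n) : Prop :=
  forall s, in_dom D c s = (in_dom D c s && krel c.1 s).

Definition hac_constr n (D : 'I_n -> {set bool}) (c : constr n) : Prop :=
  forall i x a, onth c.2 i = Some x -> a \in D x ->
    exists s, [/\ in_dom D c s, krel c.1 s & onth s i = Some a].

Definition hac n (P : csp n) : Prop := forall c, c \in cons P -> hac_constr (dom P) c.

(* phi is a reformulation of psi: removing solved constraints from both yields the
   same CSP (same constraint set, same domains). *)
Definition reformulation n (phi psi : csp n) : Prop :=
  (forall c, (c \in cons phi /\ ~ solved (dom phi) c) <->
             (c \in cons psi /\ ~ solved (dom psi) c)) /\
  (forall x, dom phi x = dom psi x).

(* A rule: constraint kind (schematic variables = positions 0,1,2 standing for
   x,y,z), premise and conclusion as lists of (position, value). *)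
Record rule := Rule { rkind : kind; prem : seq (nat * bool); concl : seq (nat * bool) }.

Definition applies n (r : rule) (P : csp n) (c : constr n) (P' : csp n) : Prop :=
  [/\ c \in cons P, c.1 = rkind r,
      (forall p, p \in prem r ->
         exists2 x, onth c.2 p.1 = Some x & dom P x = [set p.2]),
      cons P' = filter (predC1 c) (cons P) &
      (forall x, dom P' x =
         [set a in dom P x | all (fun p => (onth c.2 p.1 == Some x) ==> (a == p.2)) (concl r)])].

Definition relevant n (r : rule) (P : csp n) (c : constr n) (P' : csp n) : Prop :=
  applies r P c P' /\ ~ reformulation P' P.

(* Closed under the applications of r: no application of r is relevant. *)
Definition closed_under n (r : rule) (P : csp n) : Prop :=
  forall c P', applies r P c P' -> reformulation P' P.

Inductive rname :=
  EQU1 | EQU2 | EQU3 | EQU4 | NOT1 | NOT2 | NOT3 | NOT4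
| AND1 | AND2 | AND3 | AND4 | AND5 | AND6
| OR1 | OR2 | OR3 | OR4 | OR5 | OR6.

Definition rule_of (r : rname) : rule :=
  match r with
  | EQU1 => Rule KEq [:: (0, true)] [:: (1, true)]
  | EQU2 => Rule KEq [:: (1, true)] [:: (0, true)]
  | EQU3 => Rule KEq [:: (0, false)] [:: (1, false)]
  | EQU4 => Rule KEq [:: (1, false)] [:: (0, false)]
  | NOT1 => Rule KNot [:: (0, true)] [:: (1, false)]
  | NOT2 => Rule KNot [:: (0, false)] [:: (1, true)]
  | NOT3 => Rule KNot [:: (1, true)] [:: (0, false)]
  | NOT4 => Rule KNot [:: (1, false)] [:: (0, true)]
  | AND1 => Rule KAnd [:: (0, true); (1, true)] [:: (2, true)]
  | AND2 => Rule KAnd [:: (0, true); (2, false)] [:: (1, false)]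
  | AND3 => Rule KAnd [:: (1, true); (2, false)] [:: (0, false)]
  | AND4 => Rule KAnd [:: (0, false)] [:: (2, false)]
  | AND5 => Rule KAnd [:: (1, false)] [:: (2, false)]
  | AND6 => Rule KAnd [:: (2, true)] [:: (0, true); (1, true)]
  | OR1 => Rule KOr [:: (0, true)] [:: (2, true)]
  | OR2 => Rule KOr [:: (0, false); (1, false)] [:: (2, false)]
  | OR3 => Rule KOr [:: (0, false); (2, true)] [:: (1, true)]
  | OR4 => Rule KOr [:: (1, false); (2, true)] [:: (0, true)]
  | OR5 => Rule KOr [:: (1, true)] [:: (2, true)]
  | OR6 => Rule KOr [:: (2, false)] [:: (0, false); (1, false)]
  end.

Definition witness (r : rname) n (P : csp n) : Prop :=
  [/\ wf_csp P, ~ failed P,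
      (forall r', r' <> r -> closed_under (rule_of r') P) & ~ hac P].

Definition ex_and4 : csp 3 :=
  CSP [:: (KAnd, [:: inord 0; inord 1; inord 2])]
      (fun i : 'I_3 => if val i == 0 then [set false] else setT).

From mathcomp Require Import all_boot.
Set Implicit Arguments. Unset Strict Implicit. Unset Printing Implicit Defensive.

(* For a rule r, take a single constraint of r's kind whose premise variables
   have the singleton domains required by r and whose other variables are free.
   No other rule of BOOL applies to it, since no other rule of the same kind has
   a premise contained in that of r; so it is (vacuously) closed under them.
   But r has a conclusion y = t on a free variable y, and by soundness of r the
   value ~~ t of y has no support, so the CSP is not hyper-arc consistent. *)

Lemma in_dom_onth n (D : 'I_n -> {set bool}) (c : constr n) s j x :
  in_dom D c s -> onth c.2 j = Some x -> nth false s j \in D x.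
Proof.
rewrite /in_dom; case: c => k /= xs.
elim: xs s j => [|y xs IH] s j; first by rewrite onth0n.
case: s => [|a s] //= /andP[aD sD].
by case: j => [[<-]|j] //; apply: IH.
Qed.

Definition sat (s : seq bool) (ps : seq (nat * bool)) : bool :=
  all (fun p => nth false s p.1 == p.2) ps.

Definition sound (r : rule) : Prop :=
  forall s, krel (rkind r) s -> sat s (prem r) -> sat s (concl r).

Definition prem_consistent (r : rule) : bool :=
  all (fun p => all (fun q => (p.1 == q.1) ==> (p.2 == q.2)) (prem r)) (prem r).

Definition prem_in_scope (r : rule) : bool :=
  all (fun p => p.1 < arity (rkind r)) (prem r).

Definition free_concl (r : rule) : bool :=
  has (fun p => (p.1 < arity (rkind r)) && (p.1 \notin unzip1 (prem r))) (concl r).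

Lemma rule_of_sound (r : rname) : sound (rule_of r).
Proof.
move=> s; case: r; case: s => [|a [|b [|c [|? ?]]]] //=;
  by case: a; case: b; try case: c.
Qed.

Lemma rule_of_shape (r : rname) :
  [&& prem_consistent (rule_of r), prem_in_scope (rule_of r) & free_concl (rule_of r)].
Proof. by case: r. Qed.

Lemma rule_of_prem_minimal (r r' : rname) :
  rkind (rule_of r') = rkind (rule_of r) ->
  all (mem (prem (rule_of r))) (prem (rule_of r')) -> r' = r.
Proof. by case: r; case: r'. Qed.

Definition scope (k : kind) : seq 'I_3 :=
  take (arity k) [:: Ordinal (isT : 0 < 3); Ordinal (isT : 1 < 3); Ordinal (isT : 2 < 3)].

Definition rule_constr (r : rule) : constr 3 := (rkind r, scope (rkind r)).

Lemma wf_rule_constr r : wf_constr (rule_constr r).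
Proof. by rewrite /rule_constr; case: (rkind r). Qed.

Lemma onth_scope k j : j < arity k -> exists2 x, onth (scope k) j = Some x & val x = j.
Proof. by case: k; case: j => [|[|[|j]]] //= _; eexists. Qed.

Lemma onth_scope_val k j x : onth (scope k) j = Some x -> val x = j.
Proof. by case: k; case: j => [|[|[|j]]]; rewrite /= ?onth0n // => -[<-]. Qed.

Definition premise_dom (r : rule) {n} (i : 'I_n) : {set bool} :=
  [set a | all (fun p => (p.1 == val i) ==> (a == p.2)) (prem r)].

Definition premise_csp (r : rule) : csp 3 := CSP [:: rule_constr r] (premise_dom r).

Lemma premise_dom_set1 r n (i : 'I_n) b :
  premise_dom r i = [set b] -> (val i, b) \in prem r.
Proof.
move/setP/(_ (~~ b)); rewrite !inE; have -> : (~~ b == b) = false by case: b.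
move/negbT/allPn => -[[q c] Hqc] /=; rewrite negb_imply => /andP[/eqP <-].
by move: Hqc; case: b; case: c.
Qed.

Lemma premise_dom_neq0 r n (i : 'I_n) : prem_consistent r -> premise_dom r i != set0.
Proof.
move=> /allP cons_r; apply/set0Pn.
case: (boolP (has (fun p => p.1 == val i) (prem r))) => [/hasP[[q b] Hqb /= /eqP qi]|].
  exists b; rewrite inE; apply/allP => p Hp; apply/implyP => /eqP pi.
  by have /allP/(_ _ Hp) := cons_r _ Hqb; rewrite /= qi pi eqxx.
move=> /hasPn no_prem; exists false; rewrite inE; apply/allP => p Hp.
by rewrite (negbTE (no_prem p Hp)).
Qed.

Section PremiseCSP.

Variables (r : rule) (P : csp 3).
Hypothesis cons_P : cons P = [:: rule_constr r].
Hypothesis dom_P : dom P =1 premise_dom r.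

Lemma wf_premise_csp : wf_csp P.
Proof. by move=> c; rewrite cons_P inE => /eqP ->; apply: wf_rule_constr. Qed.

Lemma premise_csp_not_failed : prem_consistent r -> ~ failed P.
Proof. by move=> Hr [x]; rewrite dom_P; apply/eqP/premise_dom_neq0. Qed.

Lemma applies_premise_csp r' c P' :
  applies r' P c P' -> rkind r' = rkind r /\ {subset prem r' <= prem r}.
Proof.
case; rewrite cons_P inE => /eqP -> /= Hk Hprem _ _; split=> // -[q b] /Hprem[x /= qx].
by rewrite dom_P => /premise_dom_set1; rewrite (onth_scope_val qx).
Qed.

Lemma in_dom_premise_csp_sat s :
  prem_in_scope r -> in_dom (dom P) (rule_constr r) s -> sat s (prem r).
Proof.
move=> /allP Hscope Hs; apply/allP => -[q b] Hqb /=.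
have [x qx xq] := onth_scope (Hscope _ Hqb).
have := in_dom_onth Hs qx; rewrite dom_P inE => /allP/(_ _ Hqb).
by rewrite /= xq eqxx.
Qed.

Lemma premise_csp_not_hac : sound r -> prem_in_scope r -> free_concl r -> ~ hac P.
Proof.
move=> Hsound Hscope /hasP[[q t] Hqt /= /andP[q_lt q_free]] Hhac.
have [x qx xq] := onth_scope q_lt.
have Nt : ~~ t \in dom P x.
  rewrite dom_P inE; apply/allP => p Hp; apply/implyP => /eqP px.
  by case/negP: q_free; rewrite -xq -px map_f.
have := Hhac (rule_constr r); rewrite cons_P mem_head.
case/(_ isT q x _ qx Nt) => s [Hs Hrel /(onth_nth false) sq].
have /allP/(_ _ Hqt) := Hsound s Hrel (in_dom_premise_csp_sat Hscope Hs).
by rewrite /= sq; case: (t).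
Qed.

End PremiseCSP.

Lemma premise_csp_witness (r : rname) (P : csp 3) :
  cons P = [:: rule_constr (rule_of r)] -> dom P =1 premise_dom (rule_of r) ->
  witness r P.
Proof.
move=> cons_P dom_P; have /and3P[Hcons Hscope Hfree] := rule_of_shape r.
split; [exact: wf_premise_csp cons_P | exact: premise_csp_not_failed dom_P Hcons |
       | exact: premise_csp_not_hac cons_P dom_P (@rule_of_sound r) Hscope Hfree].
move=> r' Hr' c P' Happ; case: Hr'.
have [Hk /allP Hprem] := applies_premise_csp cons_P dom_P Happ.
exact: rule_of_prem_minimal.
Qed.

Theorem mainTheorem6 :
  (forall r : rname, exists n (P : csp n), witness r P) /\ witness AND4 ex_and4.
Proof.
split=> [r|]; first by exists 3, (premise_csp (rule_of r)); apply: premise_csp_witness.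
apply: premise_csp_witness => [|i].
  by congr [:: (_, [:: _; _; _])]; apply: val_inj; rewrite /= inordK.
by apply/setP => a; case: i => -[|[|[|j]]] Hi; rewrite !inE /= ?andbT; case: a.
Qed.
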